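(* Let $s\geq 1$, let $q$ be a prime power and let $C^{(1)},\ldots,C^{(s)}\in\mathbb{F}_q^{\mathbb{N}\times\mathbb{N}_0}$ be finite-row generating matrices. Let $(s_n)_{n\geq 0}$ be a sequence of $q$-adic integers that is uniformly distributed in $\mathbb{Z}_q$. Suppose that the matrices $C^{(1)},\ldots,C^{(s)}$ generate a uniformly distributed sequence in $[0,1]^s$ via Algorithm 1 (for some admissible choice of the bijections). Then, for every choice of bijections $\psi_r$ ($r\geq 0$) and $\lambda_{i,j}$, Algorithm 2 applied with these matrices and the input sequence $(s_n)_{n\geq 0}$ produces a uniformly distributed sequence in $[0,1]^s$.
   Context: $\mathbb{F}_q$ is the finite field with $q$ elements, $D_q=\{0,1,\ldots,q-1\}$. $\mathbb{Z}_q$ is the ring of $q$-adic integers; every $z\in\mathbb{Z}_q$ has a unique representation $z=\sum_{r\geq 0}a_rq^r$ with $a_r\in D_q$ (for nonnegative integers this is the base-$q$ expansion), and $\tau_k(z)=\sum_{r=0}^{k-1}a_rq^r$. A sequence $(x_n)_{n\ge0}$ in $\mathbb{Z}_q$ is uniformly distributed in $\mathbb{Z}_q$ if for every $k\geq 1$ and every $0\leq a<q^k$, $\lim_{N\to\infty}\frac1N\#\{0\le n<N:\tau_k(x_n)\equiv a \pmod{q^k}\}=q^{-k}$. A generating matrix $C^{(i)}=(c^{(i)}_{j,r})_{j\geq1,r\geq0}$ over $\mathbb{F}_q$ is finite-row if each row has only finitely many nonzero entries. Algorithm 2: choose bijections $\psi_r:D_q\to\mathbb{F}_q$ ($r\ge0$),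 finite-row matrices $C^{(1)},\dots,C^{(s)}$, bijections $\lambda_{i,j}:\mathbb{F}_q\to D_q$ ($1\le i\le s$, $j\ge1$), and a sequence $(s_n)_{n\ge0}$ in $\mathbb{Z}_q$. Writing $s_n=\sum_{r\ge0}a_rq^r$, set $x_n^{(i)}=\sum_{j\ge1}\lambda_{i,j}\big(\sum_{r\ge0}c^{(i)}_{j,r}\psi_r(a_r)\big)q^{-j}$ and $\boldsymbol{x}_n=(x_n^{(1)},\ldots,x_n^{(s)})\in[0,1]^s$. Algorithm 1 is the same construction with $s_n=n$ for all $n$ and with the bijections $\psi_r$ required to satisfy $\psi_r(0)=0$ for all sufficiently large $r$. The star discrepancy of points $\boldsymbol{x}_0,\dots,\boldsymbol{x}_{N-1}\in[0,1]^s$ is $\sup_J|A(J)/N-\mathrm{vol}(J)|$, the supremum over subintervals $J\subseteq[0,1]^s$ with one vertex at the origin, $A(J)$ the number of $n<N$ with $\boldsymbol{x}_n\in J$; a sequence is uniformly distributed if the star discrepancy of its first $N$ terms tends to $0$ as $N\to\infty$. *)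

From HB Require Import structures.
From mathcomp Require Import all_boot all_order all_algebra.
From mathcomp Require Import all_classical all_reals all_analysis.
Set Implicit Arguments. Unset Strict Implicit. Unset Printing Implicit Defensive.
Import Order.TTheory GRing.Theory Num.Theory.
Import numFieldNormedType.Exports.
Local Open Scope classical_set_scope.
Local Open Scope ring_scope.

(* The finite field F_q is an arbitrary finite field F; q := #|F|. *)
Lemma card_finField_gt0 (F : finFieldType) : (0 < #|F|)%N.
Proof. by apply/card_gt0P; exists 0. Qed.

Definition digit (F : finFieldType) := 'I_#|F|.

(* A q-adic integer, given by its (unique) digit sequence z = sum_r a_r q^r. *)
Definition Zq (F : finFieldType) := nat -> digit F.

Definition tau (F : finFieldType) (k : nat) (z : Zq F) : nat :=
  (\sum_(r < k) z r * #|F| ^ r)%N.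

Definition nat_to_Zq (F : finFieldType) (n : nat) : Zq F :=
  fun r => Ordinal (ltn_pmod (n %/ #|F| ^ r) (card_finField_gt0 F)).

Definition ud_Zq (R : realType) (F : finFieldType) (x : nat -> Zq F) : Prop :=
  forall (k a : nat), (0 < k)%N -> (a < #|F| ^ k)%N ->
    (count (fun n => tau k (x n) == a %[mod #|F| ^ k]) (iota 0 N))%:R
      / (N%:R : R) @[N --> \oo] --> (((#|F| ^ k)%:R : R)^-1).

Definition finite_row (F : finFieldType) (row : nat -> F) : Prop :=
  exists R0 : nat, forall r, (R0 <= r)%N -> row r = 0.

(* sum_{r>=0} row_r * v_r for a finite row: a finite sum up to a bound
   beyond which the row vanishes (chosen classically; any such bound
   gives the same value). *)
Definition row_sum (F : finFieldType) (row : nat -> F) (v : nat -> F) : F :=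
  let R0 := xget 0%N [set R0 : nat | forall r, (R0 <= r)%N -> row r = 0] in
  \sum_(r < R0) row r * v r.

(* Algorithm 2.  C i j r = c^{(i)}_{j,r} (rows j >= 1, columns r >= 0),
   psi r : D_q -> F_q, lam i j : F_q -> D_q (j >= 1), input sequence sq. *)
Definition alg2 (R : realType) (F : finFieldType) (s : nat)
  (C : 'I_s -> nat -> nat -> F) (psi : nat -> digit F -> F)
  (lam : 'I_s -> nat -> F -> digit F) (sq : nat -> Zq F) :
  nat -> 'I_s -> R :=
  fun n i =>
    limn (fun m => \sum_(1 <= j < m)
      ((lam i j (row_sum (C i j) (fun r => psi r (sq n r))) : nat)%:R
        * ((#|F|%:R : R) ^- j))).

Definition alg1 (R : realType) (F : finFieldType) (s : nat)
  (C : 'I_s -> nat -> nat -> F) (psi : nat -> digit F -> F)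
  (lam : 'I_s -> nat -> F -> digit F) : nat -> 'I_s -> R :=
  alg2 R C psi lam (@nat_to_Zq F).

Definition star_discrepancy (R : realType) (s : nat) (x : nat -> 'I_s -> R)
  (N : nat) : R :=
  sup [set d : R | exists t : 'I_s -> R,
        (forall i, 0 <= t i <= 1) /\
        d = `| (count (fun n => `[< forall i, 0 <= x n i < t i >]) (iota 0 N))%:R
                 / (N%:R : R) - \prod_(i < s) t i |].

Definition ud_seq (R : realType) (s : nat) (x : nat -> 'I_s -> R) : Prop :=
  star_discrepancy x @ \oo --> (0 : R).

Definition admissible2 (F : finFieldType) (s : nat)
  (psi : nat -> digit F -> F) (lam : 'I_s -> nat -> F -> digit F) : Prop :=
  (forall r, bijective (psi r)) /\
  (forall i j, (1 <= j)%N -> bijective (lam i j)).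

Definition admissible1 (F : finFieldType) (s : nat)
  (psi : nat -> digit F -> F) (lam : 'I_s -> nat -> F -> digit F) : Prop :=
  admissible2 psi lam /\
  exists R0 : nat, forall r, (R0 <= r)%N ->
    forall a : digit F, nat_of_ord a = 0%N -> psi r a = 0.

From HB Require Import structures.
From mathcomp Require Import all_boot all_order all_algebra.
From mathcomp Require Import all_classical all_reals all_analysis.
From mathcomp Require Import zify ring lra.
Set Implicit Arguments. Unset Strict Implicit. Unset Printing Implicit Defensive.
Import Order.TTheory GRing.Theory Num.Theory.
Import numFieldNormedType.Exports.
Local Open Scope classical_set_scope.
Local Open Scope ring_scope.

(* Fix a precision m and let K bound the supports of the rows 1..m of all the
   C^(i).  The first m digits of every coordinate of a point of Algorithm 2 are
   then the image, under one F_q-linear map Phi : F_q^K -> (F_q^m)^s, of the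
   first K digits of the input (transported by psi).  Uniform distribution of
   Algorithm 1 forces Phi to be surjective: a digit block outside the image would
   leave an elementary box of positive volume empty, while the error on any box
   [a, b) is at most 2^s times the star discrepancy.  The fibres of a surjective
   linear map all have the same size, so Phi pushes the equidistribution of the
   first K digits of (s_n) in Z_q forward to an equidistribution of the digit
   blocks, and counting blocks approximates every anchored box within s q^-m. *)

(** * Base-q expansions *)

Section Digits.
Variable q : nat.

Lemma digits_sum_lt K (f : 'I_K -> nat) : (forall k, f k < q)%N ->
  (\sum_(k < K) f k * q ^ k < q ^ K)%N.
Proof.
elim: K f => [|K' IH] f f_lt; first by rewrite big_ord0 expn0.
rewrite big_ord_recr /= expnSr.
have := IH (fun k => f (widen_ord (leqnSn K') k)) (fun k => f_lt _).
have := f_lt ord_max; set S := (\sum_(_ < _) _)%N; set X := (q ^ K')%N; simpl; nia.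
Qed.

Lemma digits_sum_inj K (f g : 'I_K -> nat) : (forall k, f k < q)%N -> (forall k, g k < q)%N ->
  (\sum_(k < K) f k * q ^ k = \sum_(k < K) g k * q ^ k)%N -> f =1 g.
Proof.
elim: K f g => [|K' IH] f g f_lt g_lt; first by move=> _ [].
rewrite !big_ord_recr /=.
set f' := fun k => f (widen_ord (leqnSn K') k).
set g' := fun k => g (widen_ord (leqnSn K') k).
have := @digits_sum_lt K' f' (fun k => f_lt _); have := @digits_sum_lt K' g' (fun k => g_lt _).
set Sg := (\sum_(_ < _) _)%N; set Sf := (\sum_(_ < _) _)%N; set X := (q ^ K')%N.
move=> Sg_lt Sf_lt E.
have eq_max : f ord_max = g ord_max by nia.
have eq_low : f' =1 g' by apply: IH => [k|k|]; [exact: f_lt | exact: g_lt | rewrite -/Sf -/Sg; nia].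
move=> k; case: (unliftP ord_max k) => [j ->|->] //.
have -> : lift ord_max j = widen_ord (leqnSn K') j.
  by apply: val_inj; rewrite /= /bump leqNgt ltn_ord.
exact: eq_low.
Qed.

End Digits.

Section QadicSums.
Variables (R : realType) (q : nat) (d : nat -> nat).
Hypotheses (q_gt1 : (1 < q)%N) (d_lt : forall j, (d j < q)%N).

Definition qadic_sum (M : nat) : R := \sum_(1 <= j < M) (d j)%:R * (q%:R ^- j).

Let q_gt0 : (0 : R) < q%:R. Proof. by rewrite ltr0n; lia. Qed.

Let qXV_ge0 n : (0 : R) <= q%:R ^- n.
Proof. by rewrite invr_ge0 exprn_ge0 // ltW. Qed.

Lemma qadic_sumSr M : (0 < M)%N -> qadic_sum M.+1 = qadic_sum M + (d M)%:R * q%:R ^- M.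
Proof. by move=> M_gt0; rewrite /qadic_sum big_nat_recr. Qed.

Lemma qadic_sum_nondecreasing : nondecreasing_seq qadic_sum.
Proof.
apply/nondecreasing_seqP => -[|M]; first by rewrite /qadic_sum !big_geq.
by rewrite [qadic_sum M.+2]qadic_sumSr // lerDl mulr_ge0.
Qed.

Lemma digit_weight_le (x n : nat) : (x < q)%N ->
  x%:R * q%:R ^- n.+1 + q%:R ^- n.+1 <= q%:R ^- n :> R.
Proof.
move=> x_lt; rewrite -[X in _ + X]mul1r -mulrDl natr1.
have -> : q%:R ^- n = q%:R * q%:R ^- n.+1 :> R.
  by rewrite exprS invfM mulrA mulfV ?mul1r // gt_eqF.
by rewrite ler_wpM2r // ler_nat.
Qed.

Lemma qadic_sum_le_tail m M : qadic_sum M <= qadic_sum m.+1 + q%:R ^- m.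
Proof.
have [M_le|m_lt] := leqP M m.+1.
  by apply: ler_wpDr => //; exact: qadic_sum_nondecreasing.
have tail p : qadic_sum (m.+1 + p) + q%:R ^- (m + p) <= qadic_sum m.+1 + q%:R ^- m.
  elim: p => [|p IH]; first by rewrite !addn0.
  rewrite addnS qadic_sumSr // -addrA (le_trans _ IH) // lerD2l addnS -addSn.
  exact: digit_weight_le.
have := tail (M - m.+1)%N; rewrite subnKC ?(ltnW m_lt) //.
by apply: le_trans; rewrite lerDl.
Qed.

Lemma qadic_sum_cvg : cvgn qadic_sum.
Proof.
apply: nondecreasing_is_cvgn; first exact: qadic_sum_nondecreasing.
by exists (qadic_sum 1 + q%:R ^- 0) => _ [M _ <-]; exact: qadic_sum_le_tail.
Qed.

Lemma qadic_sum_scaled m :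
  ((\sum_(k < m) d (m - k) * q ^ k)%N)%:R = qadic_sum m.+1 * q%:R ^+ m.
Proof.
have q_neq0 : q%:R != 0 :> R by rewrite gt_eqF.
elim: m => [|m IH]; first by rewrite big_ord0 /qadic_sum big_geq // mul0r.
rewrite big_ord_recl /= subn0 qadic_sumSr // natrD.
have -> : (\sum_(i < m) d (m.+1 - bump 0 i) * q ^ bump 0 i = q * \sum_(k < m) d (m - k) * q ^ k)%N.
  by rewrite big_distrr /=; apply: eq_bigr => i _; rewrite /bump add1n subSS expnS mulnCA.
rewrite expn0 muln1 natrM IH mulrDl -mulrA mulVf ?expf_neq0 // mulr1 exprS; ring.
Qed.

Lemma lim_qadic_sum_bounds m (I := (\sum_(k < m) d (m - k) * q ^ k)%N) :
  I%:R / q%:R ^+ m <= limn qadic_sum <= I.+1%:R / q%:R ^+ m.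
Proof.
have qXm_gt0 : (0 : R) < q%:R ^+ m by rewrite exprn_gt0.
rewrite -natr1 mulrDl mul1r /I qadic_sum_scaled mulfK ?gt_eqF //; apply/andP; split.
  exact: nondecreasing_cvgn_le qadic_sum_nondecreasing qadic_sum_cvg _.
apply: limr_le; first exact: qadic_sum_cvg.
by apply: nearW => M; exact: qadic_sum_le_tail.
Qed.

End QadicSums.

Lemma exists_pow_resolution (R : realType) (q s : nat) (eps : R) : (1 < q)%N -> 0 < eps ->
  exists m, s%:R / (q ^ m)%:R <= eps.
Proof.
move=> q_gt1 eps_gt0; exists (Num.truncn (s%:R / eps)).+1.
set m := (Num.truncn _).+1.
have qm_gt0 : (0 : R) < (q ^ m)%:R by rewrite ltr0n expn_gt0 (ltn_trans _ q_gt1).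
rewrite ler_pdivrMr // mulrC -ler_pdivrMr //; apply/ltW/(lt_trans (truncnS_gt _)).
by rewrite ltr_nat ltn_expl.
Qed.

(** * Discrepancy of general boxes *)

Definition freq {R : numFieldType} (P : pred nat) (N : nat) : R :=
  (count P (iota 0 N))%:R / N%:R.

Lemma freq_ge0_le1 (R : numFieldType) (P : pred nat) N : 0 <= (freq P N : R) <= 1.
Proof.
apply/andP; split; first exact: divr_ge0.
rewrite /freq; case: N => [|N]; first by rewrite invr0 mulr0.
by rewrite ler_pdivrMr ?ltr0n // mul1r ler_nat -{2}(size_iota 0 N.+1) count_size.
Qed.

Lemma freq_sub (R : numFieldType) (P P' : pred nat) N :
  (forall n, P n -> P' n) -> freq P N <= freq P' N :> R.
Proof. by move=> PP'; rewrite ler_wpM2r ?invr_ge0 // ler_nat sub_count. Qed.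

Lemma prodr_ge0_le1 (R : numDomainType) I (r : seq I) (u : I -> R) :
  (forall i, 0 <= u i <= 1) -> 0 <= \prod_(i <- r) u i <= 1.
Proof.
by move=> u01; rewrite prodr_ge0 ?prodr_ile1 // => i _; case/andP: (u01 i).
Qed.

Lemma prodr_dist_le (R : numDomainType) I (r : seq I) (u t : I -> R) :
  (forall i, 0 <= u i <= 1) -> (forall i, 0 <= t i <= 1) ->
  `|\prod_(i <- r) u i - \prod_(i <- r) t i| <= \sum_(i <- r) `|u i - t i|.
Proof.
move=> u01 t01; elim: r => [|a r IH]; first by rewrite !big_nil subrr normr0.
rewrite !big_cons.
have /andP[U0 U1] := @prodr_ge0_le1 _ _ r u u01; have /andP[ta0 ta1] := t01 a.
set U := \prod_(i <- r) u i in U0 U1 IH *; set T := \prod_(i <- r) t i in IH *.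
have -> : u a * U - t a * T = (u a - t a) * U + t a * (U - T) by ring.
apply: le_trans (ler_normD _ _) _; rewrite !normrM (ger0_norm U0) (ger0_norm ta0).
apply: lerD; first by rewrite -[leRHS]mulr1 ler_wpM2l.
by apply: le_trans IH; rewrite -[leRHS]mul1r ler_wpM2r.
Qed.

Section BoxDiscrepancy.
Variables (R : realType) (s : nat) (x : nat -> 'I_s -> R).

Definition in_box (a b : 'I_s -> R) : pred nat := fun n => [forall i, a i <= x n i < b i].

Definition box_error (a b : 'I_s -> R) (N : nat) : R :=
  `|freq (in_box a b) N - \prod_(i < s) (b i - a i)|.

Lemma anchored_box_errorE (t : 'I_s -> R) (N : nat) :
  `| (count (fun n => `[< forall i, 0 <= x n i < t i >]) (iota 0 N))%:R / (N%:R : R)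
     - \prod_(i < s) t i | = box_error (fun=> 0) t N.
Proof.
rewrite /box_error /freq; under [in RHS]eq_bigr do rewrite subr0.
congr (`|_%:R / _ - _|); apply: eq_count => n; exact/asboolP/forallP.
Qed.

Lemma star_discrepancy_setE (N : nat) :
  [set d : R | exists t : 'I_s -> R, (forall i, 0 <= t i <= 1) /\
     d = `| (count (fun n => `[< forall i, 0 <= x n i < t i >]) (iota 0 N))%:R
              / (N%:R : R) - \prod_(i < s) t i |]
  = [set d | exists2 t : 'I_s -> R, (forall i, 0 <= t i <= 1) & d = box_error (fun=> 0) t N].
Proof.
apply/seteqP; split=> d [t]; [case=> t01 -> | move=> t01 ->]; exists t;
  by rewrite ?anchored_box_errorE.
Qed.

Lemma has_sup_box_errors N :
  has_sup [set d | exists2 t : 'I_s -> R, (forall i, 0 <= t i <= 1) & d = box_error (fun=> 0) t N].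
Proof.
split; first by exists (box_error (fun=> 0) (fun=> 0) N), (fun=> 0) => // i; rewrite lexx ler01.
exists 1 => _ [t t01 ->].
have /andP[f0 f1] := freq_ge0_le1 R (in_box (fun=> 0) t) N.
have /andP[p0 p1] : 0 <= \prod_(i < s) (t i - 0) <= 1.
  by apply: prodr_ge0_le1 => i; rewrite subr0.
by apply/ler_normlP; split; lra.
Qed.

Lemma box_error_le_star_discrepancy t N : (forall i, 0 <= t i <= 1) ->
  box_error (fun=> 0) t N <= star_discrepancy x N.
Proof.
move=> t01; rewrite /star_discrepancy star_discrepancy_setE.
by apply: (sup_upper_bound (has_sup_box_errors N)); exists t.
Qed.

Lemma normr_star_discrepancy_le N e :
  (forall t, (forall i, 0 <= t i <= 1) -> box_error (fun=> 0) t N <= e) ->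
  `|star_discrepancy x N| <= e.
Proof.
move=> err_le; pose t0 : 'I_s -> R := fun=> 0.
have t0_01 i : 0 <= t0 i <= 1 by rewrite lexx ler01.
rewrite ger0_norm; last exact: le_trans (normr_ge0 _) (box_error_le_star_discrepancy N t0_01).
rewrite /star_discrepancy star_discrepancy_setE; apply: ge_sup.
  by exists (box_error (fun=> 0) t0 N), t0.
by move=> _ [t /err_le le_e ->].
Qed.

Definition set_coord (a : 'I_s -> R) (k : 'I_s) (c : R) : 'I_s -> R :=
  fun i => if i == k then c else a i.

Lemma set_coord_id (u : 'I_s -> R) k c : set_coord u k c k = c.
Proof. by rewrite /set_coord eqxx. Qed.

Lemma set_coord_other (u : 'I_s -> R) k c i : i != k -> set_coord u k c i = u i.
Proof. by rewrite /set_coord => /negbTE ->. Qed.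

Lemma in_box_split_coord a b k n : in_box a b n =
  (a k <= x n k < b k) && [forall i, (i != k) ==> (a i <= x n i < b i)].
Proof.
apply/forallP/andP => [in_ab|[in_k /forallP in_other] i].
  by split=> //; apply/forallP => i; rewrite in_ab implybT.
by have [->|ik] := eqVneq i k; last by have := in_other i; rewrite ik.
Qed.

Lemma freq_in_box_split a b k c N : a k <= c <= b k ->
  freq (in_box a b) N
  = freq (in_box (set_coord a k c) b) N + freq (in_box a (set_coord b k c)) N :> R.
Proof.
move=> /andP[ac cb]; rewrite /freq -mulrDl -natrD -count_predUI.
have rest_eq a' b' n : (forall i, i != k -> a' i = a i) -> (forall i, i != k -> b' i = b i) ->
    [forall i, (i != k) ==> (a' i <= x n i < b' i)] = [forall i, (i != k) ==> (a i <= x n i < b i)].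
  by move=> ea eb; apply: eq_forallb => i; case: eqP => //= /eqP ik; rewrite ea ?eb.
have in_boxes n : [/\ in_box a b n = (a k <= x n k < b k) && [forall i, (i != k) ==> (a i <= x n i < b i)],
    in_box (set_coord a k c) b n = (c <= x n k < b k) && [forall i, (i != k) ==> (a i <= x n i < b i)]
  & in_box a (set_coord b k c) n = (a k <= x n k < c) && [forall i, (i != k) ==> (a i <= x n i < b i)]].
  by rewrite !(@in_box_split_coord _ _ k) !set_coord_id !rest_eq //; exact: set_coord_other.
rewrite (@eq_count _ (predI _ _) pred0) ?count_pred0 ?addn0; last first.
  move=> n /=; have [_ -> ->] := in_boxes n.
  by case: (leP c (x n k)); rewrite ?andbF.
congr (_%:R / _); apply: eq_count => n /=; have [-> -> ->] := in_boxes n.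
case: [forall i, _]; rewrite ?andbF //= !andbT.
have [cx|xc] := leP c (x n k); first by rewrite (le_trans ac cx) orbF.
by rewrite /= (lt_le_trans xc cb) !andbT.
Qed.

Lemma prod_box_split a b k c : \prod_(i < s) (b i - a i)
  = \prod_(i < s) (b i - set_coord a k c i) + \prod_(i < s) (set_coord b k c i - a i).
Proof.
rewrite (bigD1 k) // [X in _ = X + _](bigD1 k) // [X in _ = _ + X](bigD1 k) //=.
have rest_a : \prod_(i < s | i != k) (b i - set_coord a k c i) = \prod_(i < s | i != k) (b i - a i).
  by apply: eq_bigr => i ik; rewrite set_coord_other.
have rest_b : \prod_(i < s | i != k) (set_coord b k c i - a i) = \prod_(i < s | i != k) (b i - a i).
  by apply: eq_bigr => i ik; rewrite set_coord_other.
by rewrite rest_a rest_b !set_coord_id; ring.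
Qed.

Lemma box_error_set_lower a b k c N : a k <= c <= b k ->
  box_error (set_coord a k c) b N <= box_error a b N + box_error a (set_coord b k c) N.
Proof.
move=> acb; rewrite /box_error (freq_in_box_split N acb) (prod_box_split a b k c).
set f1 := freq _ N; set f2 := freq _ N; set V1 := \prod_(i < s) _; set V2 := \prod_(i < s) _.
have -> : f1 - V1 = (f1 + f2 - (V1 + V2)) - (f2 - V2) by ring.
exact: ler_normB.
Qed.

Definition lower_prefix (a : 'I_s -> R) (k : nat) : 'I_s -> R :=
  fun i => if (i < k)%N then a i else 0.

Lemma lower_prefixS a k (k_lt : (k < s)%N) :
  lower_prefix a k.+1 = set_coord (lower_prefix a k) (Ordinal k_lt) (a (Ordinal k_lt)).
Proof.
apply/funext => i; rewrite /lower_prefix /set_coord ltnS leq_eqVlt.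
have [->|ik] := eqVneq i (Ordinal k_lt); first by rewrite /= eqxx.
by have -> : (nat_of_ord i == k) = false by apply: contraNF ik => /eqP ik; exact/eqP/val_inj.
Qed.

(* Inclusion-exclusion one coordinate at a time: [0, b_k) is [0, a_k) plus [a_k, b_k). *)
Lemma box_error_lower_prefix a b N k : (k <= s)%N ->
  (forall i, 0 <= a i <= b i) -> (forall i, b i <= 1) ->
  box_error (lower_prefix a k) b N <= 2 ^+ k * star_discrepancy x N.
Proof.
elim: k b => [|k IH] b k_le ab b1.
  rewrite expr0 mul1r; apply: box_error_le_star_discrepancy => i.
  by have /andP[a0 ab_i] := ab i; rewrite (le_trans a0 ab_i) b1.
set ik := Ordinal k_le; rewrite (lower_prefixS a k_le) -/ik.
have prefix_ik : lower_prefix a k ik = 0 by rewrite /lower_prefix /= ltnn.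
have /andP[a0 ab_k] := ab ik.
have := @box_error_set_lower (lower_prefix a k) b ik (a ik) N.
rewrite prefix_ik a0 ab_k => /(_ isT) /le_trans; apply.
rewrite exprS -mulrA mulr2n mulrDl mul1r; apply: lerD; first exact: IH (ltnW k_le) ab b1.
apply: IH (ltnW k_le) _ _ => i; have [->|ik_i] := eqVneq i ik.
- by rewrite set_coord_id a0 lexx.
- by rewrite set_coord_other.
- by rewrite set_coord_id (le_trans ab_k (b1 ik)).
- by rewrite set_coord_other.
Qed.

Lemma box_error_le a b N : (forall i, 0 <= a i <= b i) -> (forall i, b i <= 1) ->
  box_error a b N <= 2 ^+ s * star_discrepancy x N.
Proof.
move=> ab b1; have := box_error_lower_prefix N (leqnn s) ab b1.
suff -> : lower_prefix a s = a by [].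
by apply/funext => i; rewrite /lower_prefix ltn_ord.
Qed.

Lemma ud_seq_hits_box a b : ud_seq x -> (forall i, 0 <= a i < b i) -> (forall i, b i <= 1) ->
  exists n, in_box a b n.
Proof.
move=> ud ab b1; have [//|no_hit] := pselect (exists n, in_box a b n).
have ab' i : 0 <= a i <= b i by have /andP[a0 /ltW ab_i] := ab i; rewrite a0 ab_i.
have vol_gt0 : 0 < \prod_(i < s) (b i - a i).
  by apply: prodr_gt0 => i _; have /andP[_] := ab i; rewrite subr_gt0.
have err_vol N : box_error a b N = \prod_(i < s) (b i - a i).
  rewrite /box_error /freq (@eq_count _ _ pred0) ?count_pred0 ?mul0r ?sub0r ?normrN ?gtr0_norm //.
  by move=> n /=; apply/negP => hit; apply: no_hit; exists n.
have eps_gt0 : 0 < \prod_(i < s) (b i - a i) / 2 ^+ s.+1 by rewrite divr_gt0 ?exprn_gt0.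
move/cvgrPdist_lt: ud => /(_ _ eps_gt0) [N _ /(_ N (leqnn N))].
rewrite /= sub0r normrN => D_lt.
have := box_error_le N ab' b1; rewrite err_vol => vol_le.
have : \prod_(i < s) (b i - a i) < \prod_(i < s) (b i - a i).
  apply: le_lt_trans vol_le _; rewrite -ltr_pdivlMl ?exprn_gt0 // mulrC.
  apply: le_lt_trans (ler_norm _) (lt_le_trans D_lt _).
  by rewrite exprS invfM mulrCA ler_pdivrMl // ler_peMl // ?ler1n // ltW // divr_gt0 ?exprn_gt0.
by rewrite ltxx.
Qed.

End BoxDiscrepancy.

(** * Equidistribution on finite sets *)

(* [{ffun I -> M}] carries both a finType and a zmodType instance; this joins them. *)
HB.instance Definition _ (I : finType) (M : finZmodType) := GRing.Zmodule.on {ffun I -> M}.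

Section AdditiveFibres.
Variables (V W : finZmodType) (f : V -> W).
Hypothesis f_add : {morph f : u v / u + v}.

Lemma card_fibre_additive v0 : #|[pred v | f v == f v0]| = #|[pred v | f v == 0]|.
Proof.
rewrite -!sum1_card (reindex (+%R^~ v0)) /=; last first.
  by apply: onW_bij; exists (fun u => u - v0) => u; rewrite (addrK, subrK).
by apply: eq_bigl => u; rewrite !inE /= f_add -{2}(add0r (f v0)) (inj_eq (addIr _)).
Qed.

Lemma card_preim_surj_additive (G : pred W) : (forall w, exists v, f v = w) ->
  (#|[pred v | G (f v)]| * #|W| = #|G| * #|V|)%N.
Proof.
move=> f_surj; set k := #|[pred v | f v == 0]|.
have preim (H : pred W) : #|[pred v | H (f v)]| = (#|H| * k)%N.
  rewrite -!sum1_card (partition_big f H) //= big_distrl /=; apply: eq_bigr => w.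
  have [v0 <-] := f_surj w => Hv0; rewrite mul1n /k -(card_fibre_additive v0) -sum1_card.
  by apply: eq_bigl => v; rewrite !inE; case: eqP => [->|]; rewrite ?Hv0 ?andbF.
have cardV : #|V| = (#|W| * k)%N by rewrite -(preim predT); apply: eq_card.
by rewrite preim cardV mulnAC -mulnA.
Qed.
End AdditiveFibres.

Lemma count_comp_partition (T : finType) (p : nat -> T) (G : pred T) (r : seq nat) :
  count (fun n => G (p n)) r = (\sum_(w | G w) count (fun n => p n == w) r)%N.
Proof.
elim: r => [|n r IH] /=; first by rewrite big1.
rewrite IH big_split /=; congr (_ + _)%N.
rewrite big_mkcond (bigD1 (p n)) //= eqxx big1 ?addn0; first by case: (G (p n)).
by move=> w /negbTE; rewrite eq_sym => ->; case: (G w).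
Qed.

Lemma freq_uniform_over_sets (R : realType) (V : finType) (p : nat -> V) :
  (forall v, freq (fun n => p n == v) N @[N --> \oo] --> (#|V|%:R : R)^-1) ->
  forall eta : R, 0 < eta -> \forall N \near \oo, forall G : pred V,
    `|freq (fun n => G (p n)) N - #|G|%:R / #|V|%:R| <= eta.
Proof.
move=> p_equi eta eta_gt0.
have V_gt0 : (0 < #|V|)%N by apply/card_gt0P; exists (p 0).
have e_gt0 : 0 < eta / #|V|%:R by rewrite divr_gt0 ?ltr0n.
have : \forall N \near \oo, forall v, `|(#|V|%:R : R)^-1 - freq (fun n => p n == v) N| <= eta / #|V|%:R.
  by apply: filter_forall => v; move/cvgrPdist_le: (p_equi v); apply.
apply: filterS => N near_v G.
have -> : freq (fun n => G (p n)) N = \sum_(v | G v) freq (fun n => p n == v) N :> R.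
  by rewrite /freq count_comp_partition natr_sum mulr_suml.
rewrite mulr_natl -sumr_const -sumrB; apply: le_trans (ler_norm_sum _ _ _) _.
have sum_le : \sum_(v | G v) `|freq (fun n => p n == v) N - (#|V|%:R : R)^-1|
    <= \sum_(v | G v) eta / #|V|%:R by apply: ler_sum => v _; rewrite distrC.
apply: le_trans sum_le _; rewrite sumr_const -(mulr_natl (eta / _)) mulrA ler_pdivrMr ?ltr0n //.
by rewrite mulrC ler_pM2l // ler_nat max_card.
Qed.

Lemma card_ffun_forall (I J : finType) (P : I -> pred J) :
  #|[pred w : {ffun I -> J} | [forall i, P i (w i)]]| = (\prod_i #|P i|)%N.
Proof.
have forall_prod (w : {ffun I -> J}) : nat_of_bool [forall i, P i (w i)] = (\prod_i P i (w i))%N.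
  case: (boolP [forall i, _]) => [/forallP Pw|]; first by rewrite big1 // => i _; rewrite Pw.
  by rewrite negb_forall => /existsP[i Pwi]; rewrite (bigD1 i) //= (negbTE Pwi).
rewrite -sum1_card big_mkcond /=.
under eq_bigr => w _ do rewrite inE /= -[if _ then _ else _]/(nat_of_bool _) forall_prod.
rewrite -(bigA_distr_bigA (fun i j => nat_of_bool (P i j))).
apply: eq_bigr => i _; rewrite -sum1_card [RHS]big_mkcond /=.
by apply: eq_bigr => j _; rewrite unfold_in; case: (P i j).
Qed.

(** * Blocks of m digits *)

Section DigitIndex.
Variables (F : finFieldType) (m : nat) (l : nat -> F -> digit F).
Hypothesis l_inj : forall j, (0 < j)%N -> injective (l j).

(* Entry [k] is the digit of position [m - k], so [digit_index f / q ^ m] is the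
   q-adic fraction of the block. *)
Definition digit_index (f : {ffun 'I_m -> F}) : nat := (\sum_(k < m) l (m - k) (f k) * #|F| ^ k)%N.

Lemma digit_index_lt f : (digit_index f < #|F| ^ m)%N.
Proof. by apply: digits_sum_lt => k; exact: ltn_ord. Qed.

Lemma digit_index_inj : injective digit_index.
Proof.
move=> f g /(digits_sum_inj (fun k => ltn_ord _) (fun k => ltn_ord _)) eq_digits.
apply/ffunP => k; apply: (l_inj (j := m - k)); first by rewrite subn_gt0.
exact/val_inj/eq_digits.
Qed.

Lemma card_digit_index_preim (P : pred nat) :
  #|[pred f | P (digit_index f)]| = (\sum_(k < #|F| ^ m) P k)%N.
Proof.
pose index_ord f : 'I_(#|F| ^ m) := Ordinal (digit_index_lt f).
have index_ord_bij : bijective index_ord.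
  apply: inj_card_bij; last by rewrite card_ffun !card_ord.
  by move=> f g /(congr1 val) /digit_index_inj.
rewrite (reindex index_ord) /=; last exact: onW_bij.
by rewrite -sum1_card big_mkcond.
Qed.

End DigitIndex.

Section CountBelow.
Variable R : realType.

Definition count_lt (Q : nat) (y : R) : nat := (\sum_(k < Q) nat_of_bool (k%:R < y)%R)%N.

Lemma count_ltS Q y : count_lt Q.+1 y = (count_lt Q y + (Q%:R < y)%R)%N.
Proof. by rewrite /count_lt big_ord_recr. Qed.

Lemma count_lt_le Q y : (count_lt Q y <= Q)%N.
Proof.
elim: Q => [|Q IH]; first by rewrite /count_lt big_ord0.
by rewrite count_ltS; case: (_ < _)%R; rewrite ?addn0 ?addn1 ?ltnS // leqW.
Qed.

Lemma count_lt_ub Q y : -1 <= y -> (count_lt Q y)%:R <= y + 1.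
Proof.
move=> y_ge; elim: Q => [|Q IH]; first by rewrite /count_lt big_ord0 -lerBlDr sub0r.
rewrite count_ltS natrD; case: ltP => [Q_lt|_] /=; last by rewrite addr0.
by rewrite lerD2r (le_trans _ (ltW Q_lt)) // ler_nat count_lt_le.
Qed.

Lemma count_lt_lb Q y : y <= (count_lt Q y)%:R \/ Q = count_lt Q y.
Proof.
elim: Q => [|Q IH]; first by right; rewrite /count_lt big_ord0.
rewrite count_ltS; have [Q_lt|y_le] := ltP (Q%:R) y; rewrite /= ?addn0 ?addn1.
  case: IH => [y_le|<-]; last by right.
  by left; rewrite (le_trans y_le) // ler_nat.
by case: IH => [|Q_eq]; left; rewrite // -Q_eq.
Qed.

Lemma count_lt_approx Q t y : (0 < Q)%N -> 0 <= t <= 1 -> t * Q%:R - 1 <= y <= t * Q%:R ->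
  `|(count_lt Q y)%:R / Q%:R - t| <= Q%:R^-1.
Proof.
move=> Q_gt0 /andP[t0 t1] /andP[y_ge y_le].
have Q_gt0' : (0 : R) < Q%:R by rewrite ltr0n.
have tQ_le : t * Q%:R <= Q%:R by rewrite ler_piMl // ltW.
have c_le : (count_lt Q y)%:R <= Q%:R :> R by rewrite ler_nat count_lt_le.
have tQ_ge0 : 0 <= t * Q%:R by rewrite mulr_ge0 // ltW.
have c_ub : (count_lt Q y)%:R <= y + 1 by apply: count_lt_ub; lra.
have -> : (count_lt Q y)%:R / Q%:R - t = ((count_lt Q y)%:R - t * Q%:R) / Q%:R.
  by field; rewrite gt_eqF.
rewrite normrM normfV (gtr0_norm Q_gt0') ler_pdivrMr // mulVf ?gt_eqF //.
set c := (count_lt Q y)%:R in c_le c_ub *; set tQ := t * Q%:R in tQ_le tQ_ge0 y_ge y_le *.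
apply/ler_normlP; split; last by lra.
case: (count_lt_lb Q y) => [|Q_eq]; rewrite -/c; first by lra.
by move: c_le; rewrite /c -Q_eq; lra.
Qed.

End CountBelow.

Section DigitBoxes.
Variables (R : realType) (F : finFieldType) (s m : nat) (lam : 'I_s -> nat -> F -> digit F).
Hypothesis lam_inj : forall i j, (0 < j)%N -> injective (lam i j).
Local Notation Q := (#|F| ^ m)%N.
Local Notation W := {ffun 'I_s -> {ffun 'I_m -> F}}.

Lemma card_digit_box (P : 'I_s -> pred nat) :
  #|[pred w : W | [forall i, P i (digit_index (lam i) (w i))]]|%:R / #|W|%:R
  = \prod_(i < s) ((\sum_(k < Q) P i k)%N%:R / Q%:R) :> R.
Proof.
rewrite (card_ffun_forall (fun i f => P i (digit_index (lam i) f))).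
under eq_bigr => i _ do rewrite (@card_digit_index_preim F m (lam i) (@lam_inj i)).
by rewrite natr_prod big_split /= prodr_const card_ord card_ffun card_ffun !card_ord natrX exprVn.
Qed.

Lemma digit_box_volume_approx (t : 'I_s -> R) (c : R) : (forall i, 0 <= t i <= 1) -> 0 <= c <= 1 ->
  `|#|[pred w : W | [forall i, (digit_index (lam i) (w i))%:R < t i * Q%:R - c]]|%:R / #|W|%:R
    - \prod_(i < s) t i| <= s%:R / Q%:R.
Proof.
move=> t01 /andP[c0 c1].
have Q_gt0 : (0 < Q)%N by rewrite expn_gt0 card_finField_gt0.
rewrite (card_digit_box (fun i k => k%:R < t i * Q%:R - c)).
have cell_approx i : `|(count_lt Q (t i * Q%:R - c))%:R / Q%:R - t i| <= Q%:R^-1 :> R.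
  by apply: count_lt_approx => //; rewrite lerD2l lerN2 c1 lerBlDr lerDl.
have cell01 i : 0 <= ((count_lt Q (t i * Q%:R - c))%:R / Q%:R : R) <= 1.
  by rewrite divr_ge0 //= ler_pdivrMr ?ltr0n // mul1r ler_nat count_lt_le.
apply: le_trans (prodr_dist_le _ cell01 t01) _.
have -> : s%:R / Q%:R = \sum_(i < s) (Q%:R : R)^-1 by rewrite sumr_const card_ord mulr_natl.
exact: ler_sum.
Qed.

End DigitBoxes.

(** * The leading digits of the construction *)

Lemma row_sumE (F : finFieldType) (row v : nat -> F) K :
  (forall r, (K <= r)%N -> row r = 0) -> row_sum row v = \sum_(r < K) row r * v r.
Proof.
have trunc B B' : (B <= B')%N -> (forall r, (B <= r)%N -> row r = 0) ->
    \sum_(r < B') row r * v r = \sum_(r < B) row r * v r.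
  move=> BB' row0; rewrite (big_ord_widen B' (fun r => row r * v r) BB') [RHS]big_mkcond /=.
  by apply: eq_bigr => r _; case: ltnP => // /row0 ->; rewrite mul0r.
move=> row0; rewrite /row_sum; case: xgetP => [R0 _ row0'|no_bound]; last by case: (no_bound K).
by rewrite -(trunc _ (maxn K R0)) ?leq_maxr // (trunc _ _ (leq_maxl K R0)).
Qed.

Lemma tau_eq_digits (F : finFieldType) K (z : Zq F) (b : 'I_K -> digit F) :
  (tau K z == (\sum_(r < K) b r * #|F| ^ r)%N %[mod #|F| ^ K]) = [forall r : 'I_K, z r == b r].
Proof.
have digits_lt (c : 'I_K -> digit F) : (\sum_(r < K) c r * #|F| ^ r < #|F| ^ K)%N.
  by apply: digits_sum_lt => r; exact: ltn_ord.
rewrite /tau !modn_small ?digits_lt //.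
apply/eqP/forallP => [/(digits_sum_inj (fun r => ltn_ord _) (fun r => ltn_ord _)) zb r|zb].
  exact/eqP/val_inj/zb.
by apply: eq_bigr => r _; rewrite (eqP (zb r)).
Qed.

Lemma finite_rows_bound (F : finFieldType) s (C : 'I_s -> nat -> nat -> F) m :
  (forall i j, (1 <= j)%N -> finite_row (C i j)) ->
  exists K, (0 < K)%N /\ forall i (k : 'I_m) r, (K <= r)%N -> C i (m - k)%N r = 0.
Proof.
move=> C_fin.
have /boolp.choice[bound bound_ok] : forall ik : 'I_s * 'I_m,
    exists B, forall r, (B <= r)%N -> C ik.1 (m - ik.2)%N r = 0.
  by case=> i k; apply: C_fin; rewrite subn_gt0.
exists (\max_ik bound ik).+1; split=> // i k r K_le; apply: (bound_ok (i, k)).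
exact: leq_trans (leq_bigmax (i, k)) (ltnW K_le).
Qed.

Lemma cell_index_eq (R : realType) (Q I J : nat) (y : R) : (0 < Q)%N ->
  I%:R / Q%:R <= y <= I.+1%:R / Q%:R -> (J%:R + 3^-1) / Q%:R <= y < (J%:R + 2 / 3) / Q%:R ->
  I = J.
Proof.
move=> Q_gt0; have Q_gt0' : (0 : R) < Q%:R by rewrite ltr0n.
rewrite !ler_pdivrMr // !ler_pdivlMr // ltr_pdivlMr //.
move=> /andP[I_le le_I1] /andP[J_le lt_J].
have : (I < J.+1)%N by rewrite -(ltr_nat R) -natr1; lra.
have : (J < I.+1)%N by rewrite -(ltr_nat R) -natr1; lra.
lia.
Qed.

Section ConstructionDigits.
Variables (F : finFieldType) (s m K : nat) (C : 'I_s -> nat -> nat -> F).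
Local Notation V := {ffun 'I_K -> F}.
Local Notation W := {ffun 'I_s -> {ffun 'I_m -> F}}.

Definition input_digits (psi : nat -> digit F -> F) (z : Zq F) : V := [ffun r : 'I_K => psi r (z r)].

Definition digit_map (v : V) : W := [ffun i => [ffun k : 'I_m => \sum_(r < K) C i (m - k)%N r * v r]].

Lemma digit_map_add : {morph digit_map : u v / u + v}.
Proof.
move=> u v; apply/ffunP => i; apply/ffunP => k; rewrite !ffunE -big_split /=.
by apply: eq_bigr => r _; rewrite ffunE mulrDr.
Qed.

Lemma freq_input_digits (R : realType) (psi : nat -> digit F -> F) (sq : nat -> Zq F) v :
  (forall r, bijective (psi r)) -> ud_Zq R sq -> (0 < K)%N ->
  freq (fun n => input_digits psi (sq n) == v) N @[N --> \oo] --> (#|V|%:R : R)^-1.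
Proof.
move=> psi_bij sq_ud K_gt0.
have /boolp.choice[g gK] : forall r, exists g : F -> digit F, cancel (psi r) g /\ cancel g (psi r).
  by move=> r; have [g psiK gK] := psi_bij r; exists g.
set b := fun r : 'I_K => g r (v r).
have input_eq z : (input_digits psi z == v) = (tau K z == (\sum_(r < K) b r * #|F| ^ r)%N %[mod #|F| ^ K]).
  rewrite tau_eq_digits; apply/eqP/forallP => [zv r|zb].
    by rewrite /b -zv ffunE (gK r).1.
  by apply/ffunP => r; rewrite ffunE (eqP (zb r)) /b (gK r).2.
rewrite card_ffun card_ord; under eq_fun do rewrite /freq (eq_count (fun n => input_eq (sq n))).
by apply: sq_ud => //; apply: digits_sum_lt => r; exact: ltn_ord.
Qed.

Lemma digit_map_freq_uniform (R : realType) (psi : nat -> digit F -> F) (sq : nat -> Zq F) :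
  (forall r, bijective (psi r)) -> ud_Zq R sq -> (0 < K)%N -> (forall w, exists v, digit_map v = w) ->
  forall eta : R, 0 < eta -> \forall N \near \oo, forall G : pred W,
    `|freq (fun n => G (digit_map (input_digits psi (sq n)))) N - #|G|%:R / #|W|%:R| <= eta.
Proof.
move=> psi_bij sq_ud K_gt0 surj eta eta_gt0.
have := freq_uniform_over_sets (fun v => freq_input_digits v psi_bij sq_ud K_gt0) eta_gt0.
apply: filterS => N near_V G.
have V_gt0 : (0 < #|V|)%N by apply/card_gt0P; exists 0.
have W_gt0 : (0 < #|W|)%N by apply/card_gt0P; exists 0.
have -> : #|G|%:R / #|W|%:R = #|[pred v | G (digit_map v)]|%:R / #|V|%:R :> R.
  apply/eqP; rewrite eqr_div ?pnatr_eq0 -?lt0n // -!natrM.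
  by rewrite (card_preim_surj_additive digit_map_add G surj).
exact: near_V.
Qed.

Section BoundedRows.
Hypothesis C_vanish : forall i (k : 'I_m) r, (K <= r)%N -> C i (m - k)%N r = 0.

Lemma alg2_cell_bounds (R : realType) psi lam sq n i
    (I := digit_index (lam i) (digit_map (input_digits psi (sq n)) i)) :
  I%:R / (#|F| ^ m)%:R <= alg2 R C psi lam sq n i <= I.+1%:R / (#|F| ^ m)%:R.
Proof.
set d := fun j => nat_of_ord (lam i j (row_sum (C i j) (fun r => psi r (sq n r)))).
have -> : alg2 R C psi lam sq n i = limn (qadic_sum R #|F| d) by [].
have -> : I = (\sum_(k < m) d (m - k) * #|F| ^ k)%N.
  rewrite /I /digit_index; apply: eq_bigr => k _; rewrite /d !ffunE (row_sumE _ (C_vanish i k)).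
  by congr (nat_of_ord (lam _ _ _) * _)%N; apply: eq_bigr => r _; rewrite ffunE.
rewrite natrX; exact: lim_qadic_sum_bounds (card_finNzRing_gt1 F) (fun j => ltn_ord _) m.
Qed.

(* A point in the middle third of the cell of [w] has leading digit block [w]. *)
Lemma digit_map_surj (R : realType) (psi1 : nat -> digit F -> F) (lam1 : 'I_s -> nat -> F -> digit F) :
  (forall i j, (0 < j)%N -> injective (lam1 i j)) -> ud_seq (alg1 R C psi1 lam1) ->
  forall w, exists v, digit_map v = w.
Proof.
move=> lam1_inj ud w.
set Q := (#|F| ^ m)%N; set J := fun i => digit_index (lam1 i) (w i).
have Q_gt0 : (0 : R) < Q%:R by rewrite ltr0n expn_gt0 card_finField_gt0.
pose a i : R := ((J i)%:R + 3^-1) / Q%:R.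
pose b i : R := ((J i)%:R + 2 / 3) / Q%:R.
have ab i : 0 <= a i < b i.
  rewrite divr_ge0 ?addr_ge0 ?invr_ge0 //= ltr_pM2r ?invr_gt0 //; lra.
have b1 i : b i <= 1.
  have := digit_index_lt (lam1 i) (w i); rewrite -/(J i) -(ler_nat R) -natr1 => J_lt.
  by rewrite ler_pdivrMr // mul1r; lra.
have [n /forallP hit] := ud_seq_hits_box ud ab b1.
exists (input_digits psi1 (nat_to_Zq F n)); apply/ffunP => i.
apply: (digit_index_inj (@lam1_inj i)); apply: (cell_index_eq (Q := Q)) (hit i).
  by rewrite expn_gt0 card_finField_gt0.
exact: alg2_cell_bounds.
Qed.

(* An anchored box is squeezed between the digit-block sets {index < tQ - 1} and {index < tQ}. *)
Lemma alg2_box_error (R : realType) (psi : nat -> digit F -> F) (lam : 'I_s -> nat -> F -> digit F)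
    (sq : nat -> Zq F) (t : 'I_s -> R) N (eps : R) :
  (forall i j, (0 < j)%N -> injective (lam i j)) ->
  s%:R / (#|F| ^ m)%:R <= eps / 2 ->
  (forall G : pred W,
    `|freq (fun n => G (digit_map (input_digits psi (sq n)))) N - #|G|%:R / #|W|%:R| <= eps / 2) ->
  (forall i, 0 <= t i <= 1) ->
  box_error (alg2 R C psi lam sq) (fun=> 0) t N <= eps.
Proof.
move=> lam_inj sQ_le freq_close t01.
set Q := (#|F| ^ m)%N; set x := alg2 R C psi lam sq.
set p := fun n => digit_map (input_digits psi (sq n)).
have Q_gt0 : (0 : R) < Q%:R by rewrite ltr0n expn_gt0 card_finField_gt0.
pose G (c : R) := [pred w : W | [forall i, (digit_index (lam i) (w i))%:R < t i * Q%:R - c]].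
have cell n i := alg2_cell_bounds R psi lam sq n i.
have lower : freq (fun n => G 1 (p n)) N <= freq (in_box x (fun=> 0) t) N :> R.
  apply: freq_sub => n /forallP inG; apply/forallP => i.
  have /andP[lo hi] := cell n i; have := inG i; rewrite -/Q -/(p n) => I_lt.
  rewrite (le_trans _ lo) ?divr_ge0 //=; apply: le_lt_trans hi _.
  by rewrite ltr_pdivrMr // -natr1; lra.
have upper : freq (in_box x (fun=> 0) t) N <= freq (fun n => G 0 (p n)) N :> R.
  apply: freq_sub => n /forallP inbox; apply/forallP => i.
  have /andP[lo _] := cell n i; have /andP[_ x_lt] := inbox i.
  by rewrite subr0 -ltr_pdivrMr //; exact: le_lt_trans lo x_lt.
have vol c : 0 <= c <= 1 -> `|#|G c|%:R / #|W|%:R - \prod_(i < s) t i| <= eps / 2.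
  by move=> c01; apply: le_trans sQ_le; exact: digit_box_volume_approx.
have := vol 0; rewrite lexx ler01 => /(_ isT) /ler_normlP[vol0_lo vol0_hi].
have := vol 1; rewrite lexx ler01 => /(_ isT) /ler_normlP[vol1_lo vol1_hi].
have /ler_normlP[f0_lo f0_hi] : `|freq (fun n => G 0 (p n)) N - #|G 0|%:R / #|W|%:R| <= eps / 2
  := freq_close (G 0).
have /ler_normlP[f1_lo f1_hi] : `|freq (fun n => G 1 (p n)) N - #|G 1|%:R / #|W|%:R| <= eps / 2
  := freq_close (G 1).
rewrite /box_error; under eq_bigr do rewrite subr0.
by apply/ler_normlP; split; lra.
Qed.

End BoundedRows.
End ConstructionDigits.

Theorem theorem1 (R : realType) (F : finFieldType) (s : nat) (hs : (1 <= s)%N)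
  (C : 'I_s -> nat -> nat -> F)
  (hC : forall i j, (1 <= j)%N -> finite_row (C i j))
  (sq : nat -> Zq F) (hsq : ud_Zq R sq)
  (h1 : exists psi1 lam1, admissible1 psi1 lam1 /\ ud_seq (alg1 R C psi1 lam1)) :
  forall (psi : nat -> digit F -> F) (lam : 'I_s -> nat -> F -> digit F),
    admissible2 psi lam -> ud_seq (alg2 R C psi lam sq).
Proof.
move=> psi lam [psi_bij lam_bij].
have [psi1 [lam1 [[[_ lam1_bij] _] ud1]]] := h1.
have inj (l : 'I_s -> nat -> F -> digit F) : (forall i j, (1 <= j)%N -> bijective (l i j)) ->
  forall i j, (0 < j)%N -> injective (l i j) by move=> l_bij i j /l_bij /bij_inj.
apply/cvgrPdist_le => eps eps_gt0; have eps2_gt0 : 0 < eps / 2 by rewrite divr_gt0.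
have [m sQ_le] := exists_pow_resolution s (card_finNzRing_gt1 F) eps2_gt0.
have [K [K_gt0 C_vanish]] := finite_rows_bound m hC.
have surj := digit_map_surj C_vanish (inj _ lam1_bij) ud1.
apply: filterS (digit_map_freq_uniform psi_bij hsq K_gt0 surj eps2_gt0) => N freq_close.
rewrite sub0r normrN; apply: normr_star_discrepancy_le => t t01.
by move: (alg2_box_error C_vanish (inj _ lam_bij) sQ_le freq_close t01).
Qed.
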